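(* $\mathfrak{cp}((\mathcal{P}(\omega)/\mathrm{fin})^-)=\mathfrak{r}$.
   Context: $\mathcal{P}(\omega)/\mathrm{fin}$ is the Boolean algebra of subsets of $\omega$ modulo finite sets; for a Boolean algebra $B$, $B^-=B\setminus\{0,1\}$ ordered by the Boolean order. For a poset $(P,\le)$, $F\subseteq P$ is a comparable family if for every $p\in P$ there is $q\in F$ with $p\le q$ or $q\le p$; $\mathfrak{cp}(P)$ is the minimal size of a comparable family. $\mathfrak{r}$ is the reaping number: the minimal size of a family $\mathcal{R}\subseteq[\omega]^\omega$ such that no single $X\subseteq\omega$ splits every member of $\mathcal{R}$ (i.e., for every $X$ there is $R\in\mathcal{R}$ with $R\subseteq^* X$ or $R\subseteq^*\omega\setminus X$). *)

From mathcomp Require Import all_boot.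
From mathcomp Require Import boolp classical_sets functions cardinality.
Set Implicit Arguments. Unset Strict Implicit. Unset Printing Implicit Defensive.
Local Open Scope classical_set_scope.

Definition almost_sub (A B : set nat) : Prop := finite_set (A `\` B).
Definition almost_eq (A B : set nat) : Prop := almost_sub A B /\ almost_sub B A.

(* The elements of P(omega)/fin are equivalence classes [A] = {B | A =* B}. *)
Definition fin_class (A : set nat) : set (set nat) := [set B | almost_eq A B].

(* (P(omega)/fin)^- : classes other than 0 = [finite] and 1 = [cofinite],
   i.e. the classes of infinite, co-infinite sets. *)
Definition Pfin_minus : set (set (set nat)) :=
  [set C | exists A : set nat, [/\ infinite_set A, infinite_set (~` A) & C = fin_class A]].

(* Boolean order on P(omega)/fin: [A] <= [B] iff A \subseteq^* B
   (independent of representatives). *)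
Definition Pfin_le (C D : set (set nat)) : Prop :=
  exists A B, [/\ C A, D B & almost_sub A B].

Definition comparable_family T (P : set T) (le : T -> T -> Prop) (F : set T) : Prop :=
  F `<=` P /\ forall p, P p -> exists2 q, F q & (le p q \/ le q p).

(* Reaping (unsplit) family: R \subseteq [omega]^omega, and no X splits every member. *)
Definition reaping_family (R : set (set nat)) : Prop :=
  (forall Y, R Y -> infinite_set Y) /\
  forall X : set nat, exists2 Y, R Y & (almost_sub Y X \/ almost_sub Y (~` X)).

Definition min_card T (Q : set T -> Prop) (F : set T) : Prop :=
  Q F /\ forall G, Q G -> (F #<= G)%card.

(* Both sides are infinite cardinals and each bounds the other up
   to a factor 2, which is absorbed since 2 * kappa = kappa for infinite kappa:
   - from a reaping family R one gets a comparable family of size <= |R * 2|: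
     for Y in R pick an infinite, co-infinite Z_Y included in Y, and take the
     classes [Z_Y] and [omega \ Z_Y]; if Y is almost included in A then
     [Z_Y] <= [A], and if Y is almost disjoint from A then [A] <= [omega \ Z_Y];
   - from a comparable family F one gets a reaping family of size <= |F * 2|:
     take a representative A of each class of F together with its complement.
   Reaping families are infinite (finitely many infinite sets are split by a
   single set, built by interleaving), hence so are comparable families. *)

From mathcomp Require Import all_boot.
From mathcomp Require Import boolp classical_sets functions cardinality.
From mathcomp Require Import wochoice.
Set Implicit Arguments. Unset Strict Implicit. Unset Printing Implicit Defensive.
Local Open Scope classical_set_scope.
Local Open Scope card_scope.

Lemma card_le_inj T U (A : set T) (B : set U) (f : T -> U) :
  set_fun A B f -> set_inj A f -> A #<= B.
Proof.
move=> fAB fi; have [F] : $|{injfun A >-> B}| by apply/injfunPex; exists f.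
exact: inj_card_le F.
Qed.

(* Zorn's lemma is applied to such
   relations ordered by inclusion, since unions of chains stay partial
   injections. *)
Section PartialInjections.
Variables T U : Type.
Implicit Types g h : set (T * U).

Definition pdom g : set T := [set x | exists y, g (x, y)].
Definition pran g : set U := [set y | exists x, g (x, y)].

Definition partial_inj g : Prop :=
  (forall x y y', g (x, y) -> g (x, y') -> y = y') /\
  (forall x x' y, g (x, y) -> g (x', y) -> x = x').

Lemma partial_inj_bigcup (F : set (set (T * U))) :
  F `<=` partial_inj -> total_on F subset -> partial_inj (\bigcup_(g in F) g).
Proof.
move=> Fpi Ftot; split.
- move=> x y y' [g1 Fg1 g1xy] [g2 Fg2 g2xy'].
  have [/(_ _ g1xy) g2xy|/(_ _ g2xy') g1xy'] := Ftot _ _ Fg1 Fg2.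
  + exact: (Fpi _ Fg2).1 g2xy g2xy'.
  + exact: (Fpi _ Fg1).1 g1xy g1xy'.
- move=> x x' y [g1 Fg1 g1xy] [g2 Fg2 g2x'y].
  have [/(_ _ g1xy) g2xy|/(_ _ g2x'y) g1x'y] := Ftot _ _ Fg1 Fg2.
  + exact: (Fpi _ Fg2).2 g2xy g2x'y.
  + exact: (Fpi _ Fg1).2 g1xy g1x'y.
Qed.

Lemma partial_injU g h : partial_inj g -> partial_inj h ->
  pdom g `&` pdom h = set0 -> pran g `&` pran h = set0 -> partial_inj (g `|` h).
Proof.
move=> [gf gi] [hf hi] dom0 ran0.
have dom_disj x y y' : g (x, y) -> h (x, y') -> False.
  by move=> gxy hxy'; rewrite -[False]/(set0 x) -dom0; split; [exists y|exists y'].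
have ran_disj x x' y : g (x, y) -> h (x', y) -> False.
  by move=> gxy hx'y; rewrite -[False]/(set0 y) -ran0; split; [exists x|exists x'].
split.
- move=> x y y' [gxy|hxy] [gxy'|hxy'] //; [exact: gf gxy gxy'| | |exact: hf hxy hxy'].
  + by case: (dom_disj _ _ _ gxy hxy').
  + by case: (dom_disj _ _ _ gxy' hxy).
- move=> x x' y [gxy|hxy] [gx'y|hx'y] //; [exact: gi gxy gx'y| | |exact: hi hxy hx'y].
  + by case: (ran_disj _ _ _ gxy hx'y).
  + by case: (ran_disj _ _ _ gx'y hxy).
Qed.

End PartialInjections.

Definition pfun (T : Type) (U : choiceType) (y0 : U) (g : set (T * U)) (x : T) : U :=
  xget y0 (fun y => g (x, y)).

Lemma pfunP (T : Type) (U : choiceType) (y0 : U) (g : set (T * U)) x :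
  pdom g x -> g (x, pfun y0 g x).
Proof. exact: xgetPex. Qed.

Lemma pfun_inj (T : Type) (U : choiceType) (y0 : U) (g : set (T * U)) :
  partial_inj g -> set_inj (pdom g) (pfun y0 g).
Proof.
move=> [_ gi] x x' /set_mem Dx /set_mem Dx' fxx'.
by apply: gi (pfunP y0 Dx) _; rewrite fxx'; exact: pfunP.
Qed.

Lemma partial_inj_card_le (T : Type) (U : choiceType) (g : set (T * U)) :
  partial_inj g -> pdom g #<= pran g.
Proof.
move=> gpi; have [[[_ y0] _]|g0] := pselect (exists p, g p); last first.
  suff -> : pdom g = set0 by exact: card_ge0.
  by apply/seteqP; split=> // x [y gxy]; apply: g0; exists (x, y).
apply: (@card_le_inj _ _ _ _ (pfun y0 g)); last exact: pfun_inj.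
by move=> x Dx; exists x; exact: pfunP.
Qed.

Lemma partial_inj_card_eq (T U : choiceType) (g : set (T * U)) :
  partial_inj g -> pdom g #= pran g.
Proof.
move=> gpi; apply/card_eqPle; split; first exact: partial_inj_card_le.
pose h := [set p : U * T | g (p.2, p.1)].
have -> : pran g = pdom h by [].
have -> : pdom g = pran h by [].
apply: partial_inj_card_le; case: gpi => gf gi.
by split=> [x y y' hxy hxy'|x x' y hxy hx'y]; [exact: gi hxy hxy'|exact: gf hxy hx'y].
Qed.

Section WellOrder.
Variables (U : eqType) (W : rel U).
Hypothesis W_wo : well_order W.

Lemma wo_least (P : set U) x : P x -> exists2 z, P z & forall y, P y -> W z y.
Proof.
move=> Px; have [|z [[zP zlb] _]] := @W_wo [pred y | `[< P y >]].
  by exists x; rewrite inE.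
exists z; first by move: zP; rewrite inE.
by move=> y Py; apply: zlb; rewrite inE.
Qed.

Lemma wo_antisym x y : W x y -> W y x -> x = y.
Proof.
move=> xy yx; apply: (wo_chain_antisymmetric (withinW W_wo)) => //.
by rewrite xy yx.
Qed.

Definition initial (I : set U) : Prop := forall x y, W x y -> I y -> I x.

(* A nonempty family of initial segments has a least element for inclusion:
   take a segment missing the W-least possible point. *)
Lemma initial_least (Th : set (set U)) : Th `<=` initial -> (exists I, Th I) ->
  exists2 I0, Th I0 & forall J, Th J -> I0 `<=` J.
Proof.
move=> Thi [I ThI].
have [[m missed]|no_missed] := pselect (exists m, exists2 J, Th J & ~ J m); last first.
  exists I => // J ThJ x _; apply: contrapT => nJx.
  by apply: no_missed; exists x, J.
have [m0 [I0 ThI0 nI0m0] m0_least] :=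
  @wo_least (fun m => exists2 J, Th J & ~ J m) m missed.
exists I0 => // J ThJ x I0x; apply: contrapT => nJx.
by apply: nI0m0; apply: (Thi _ ThI0) I0x; apply: m0_least; exists J.
Qed.

End WellOrder.

(* Every set is equinumerous to an initial segment of a well-order: a maximal
   partial injection from S onto an initial segment either exhausts S or has
   the whole type as range, otherwise it extends by sending a missing point
   of S to the least point outside its range. *)
Lemma card_eq_initial (U : choiceType) (W : rel U) (S : set U) :
  well_order W -> exists2 I, initial W I & S #= I.
Proof.
move=> W_wo; pose P (g : set (U * U)) :=
  [/\ partial_inj g, pdom g `<=` S & initial W (pran g)].
have [g [[gpi gS gini] gmax]] : exists g, P g /\ forall h, g `<` h -> ~ P h.
  apply: Zorn_bigcup => F FP Ftot; split.
  - by apply: partial_inj_bigcup Ftot => g /FP [].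
  - by move=> x [y [g Fg gxy]]; case: (FP _ Fg) => _ gS _; apply: gS; exists y.
  - move=> u v Wuv [x [g Fg gxv]]; case: (FP _ Fg) => _ _ /(_ u v Wuv) gini.
    by have [x' gx'u] := gini (ex_intro _ x gxv); exists x', g.
have [SD|/existsNP[s /not_implyP[Ss nDs]]] := pselect (S `<=` pdom g).
  exists (pran g) => //; suff -> : S = pdom g by exact: partial_inj_card_eq.
  by apply/seteqP; split.
have [full|/existsNP[u0 nEu0]] := pselect (forall y, pran g y).
  exists setT => //; apply/card_eqPle; split; first exact: card_leT.
  have -> : [set: U] = pran g by apply/seteqP; split=> // y _; exact: full.
  by rewrite -(card_le_eql (partial_inj_card_eq gpi)); exact: subset_card_le.
have [u nEu u_least] := @wo_least _ _ W_wo (fun y => ~ pran g y) u0 nEu0.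
exfalso; apply: (gmax (g `|` [set (s, u)])).
  split; first by move=> p gp; left.
  by move=> /(_ (s, u) (or_intror erefl)) gsu; apply: nDs; exists u.
split.
- apply: partial_injU => //.
  + by split=> [x y y' [_ ->] [_ ->]|x x' y [-> _] [-> _]].
  + by apply/seteqP; split=> // x [Dx [y [xs _]]]; apply: nDs; rewrite -xs.
  + by apply/seteqP; split=> // y [Ey [x [_ yu]]]; apply: nEu; rewrite -yu.
- by move=> x [y [gxy|[-> _]]] //; apply: gS; exists y.
- move=> v w Wvw [x [gxw|[_ wu]]].
    by have [x' gx'v] := gini _ _ Wvw (ex_intro _ x gxw); exists x'; left.
  have [[x' gx'v]|nEv] := pselect (pran g v); first by exists x'; left.
  rewrite wu in Wvw.
  by rewrite (wo_antisym W_wo Wvw (u_least v nEv)); exists s; right.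
Qed.

Lemma min_card_exists (U : choiceType) (Q : set U -> Prop) :
  (exists S, Q S) -> exists S, min_card Q S.
Proof.
move=> [S1 QS1]; have [W W_wo] := well_ordering_principle U.
pose Th I := initial W I /\ exists2 S, Q S & S #= I.
have [I0 [_ [S0 QS0 S0I0]] I0_least] : exists2 I0, Th I0 & forall J, Th J -> I0 `<=` J.
  apply: (initial_least W_wo) => [I []//|].
  by have [I Iini S1I] := card_eq_initial S1 W_wo; exists I; split=> //; exists S1.
exists S0; split=> // G QG; have [J Jini GJ] := card_eq_initial G W_wo.
have I0J : I0 `<=` J by apply: I0_least; split=> //; exists G.
by rewrite (card_le_eql S0I0) (card_le_eqr GJ); exact: subset_card_le.
Qed.

Lemma infinite_nat_inj (T : Type) (S : set T) : infinite_set S ->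
  exists2 e : nat -> T, forall n, S (e n) & injective e.
Proof.
move=> /infiniteP /card_leP [F].
exists (fun n => val (F (to_setT n))) => [n|m n /val_inj Fmn]; first exact: set_valP.
have := 'inj_F; move=> /(_ (to_setT m) (to_setT n)); rewrite !inE => /(_ I I Fmn).
by move=> /(congr1 val).
Qed.

(* An infinite set splits into two infinite parts (even and odd terms of an
   injective sequence). *)
Lemma infinite_split (T : Type) (Y : set T) : infinite_set Y ->
  exists2 Z, Z `<=` Y & infinite_set Z /\ infinite_set (Y `\` Z).
Proof.
move=> /infinite_nat_inj [e eY einj].
exists [set e n.*2 | n in [set: nat]]; first by move=> _ [n _ <-].
split; apply/infiniteP.
  apply: (@card_le_inj _ _ _ _ (fun n => e n.*2)) => [n _|m n _ _ /einj]; first by exists n.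
  by move/(congr1 half); rewrite !doubleK.
apply: (@card_le_inj _ _ _ _ (fun n => e n.*2.+1)) => [n _|m n _ _ /einj []].
  split=> // -[m _ /einj /(congr1 odd)]; by rewrite /= !odd_double.
by move/(congr1 half); rewrite !doubleK.
Qed.

Lemma double_addb_inj (m n : nat) (b b' : bool) :
  (m.*2 + b = n.*2 + b')%N -> m = n /\ b = b'.
Proof.
move=> E; have bb' : b = b' by move: (congr1 odd E); rewrite !oddD !odd_double /= !oddb.
by subst b'; split=> //; move/addIn: E => /(congr1 half); rewrite !doubleK.
Qed.

(* If d injects X * 2 into X, with X infinite, then A * 2 injects into X
   whenever A \ X is finite: (x, b) with x in X goes to d (d (x, b), true),
   and the finitely many other pairs go into d (_, false) through an injective
   sequence of X. *)
Lemma card_le_absorb_finite (T : Type) (A X : set T) (d : T * bool -> T) :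
  infinite_set X -> finite_set (A `\` X) ->
  set_fun (X `*` [set: bool]) X d -> set_inj (X `*` [set: bool]) d ->
  A `*` [set: bool] #<= X.
Proof.
move=> Xinf AXfin dX dinj.
have [e eX einj] := infinite_nat_inj Xinf.
have [c cinj] : exists c : T * bool -> nat, {in (A `\` X) `*` [set: bool] &, injective c}.
  by apply/pcard_injP; apply/finite_set_countable/finite_setX.
have dXX x b : X x -> X (d (x, b)) by move=> Xx; apply: dX.
have dinjX x b x' b' : X x -> X x' -> d (x, b) = d (x', b') -> (x, b) = (x', b').
  by move=> Xx Xx'; apply: dinj; rewrite inE.
pose h (z : T * bool) := if `[< X z.1 >] then d (d z, true) else d (e (c z), false).
apply: (@card_le_inj _ _ _ _ h) => [[a b] [/= Aa _]|[a b] [a' b']].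
  by rewrite /h /=; case: ifPn => [/asboolP Xa|_]; [exact/dXX/dXX|exact/dXX/eX].
move=> /set_mem [/= Aa _] /set_mem [/= Aa' _]; rewrite /h /=.
case: ifPn => [/asboolP Xa|/asboolP nXa]; case: ifPn => [/asboolP Xa'|/asboolP nXa'].
- by move=> /(dinjX _ _ _ _ (dXX _ _ Xa) (dXX _ _ Xa')) [] /(dinjX _ _ _ _ Xa Xa').
- by move=> /(dinjX _ _ _ _ (dXX _ _ Xa) (eX _)) [].
- by move=> /(dinjX _ _ _ _ (eX _) (dXX _ _ Xa')) [].
- by move=> /(dinjX _ _ _ _ (eX _) (eX _)) [] /einj; apply: cinj; rewrite inE.
Qed.

(* A doubling on A is a partial injection g from X * bool into X, for some
   X = dbase g included in A.  A maximal doubling leaves only finitely many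
   points of A outside X, since an infinite remainder contains a copy of nat
   on which (n, b) |-> 2n + b provides an extension. *)
Section Doubling.
Variables (T : choiceType) (A : set T).
Implicit Types g h : set ((T * bool) * T).

Definition dbase g : set T := [set x | pdom g (x, true)].

Definition doubling g : Prop :=
  [/\ partial_inj g, dbase g `<=` A,
      (forall x b b', pdom g (x, b) -> pdom g (x, b')) & pran g `<=` dbase g].

Lemma doubling_bigcup (F : set (set ((T * bool) * T))) :
  F `<=` doubling -> total_on F subset -> doubling (\bigcup_(g in F) g).
Proof.
move=> Fd Ftot; split.
- by apply: partial_inj_bigcup Ftot => g /Fd [].
- by move=> x [y [g Fg gxy]]; have [_ gA _ _] := Fd _ Fg; apply: gA; exists y.
- move=> x b b' [y [g Fg gxy]]; have [_ _ gflip _] := Fd _ Fg.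
  by have [y' gxy'] := gflip x b b' (ex_intro _ y gxy); exists y', g.
- move=> y [p [g Fg gpy]]; have [_ _ _ gran] := Fd _ Fg.
  by have [y' gy] := gran y (ex_intro _ p gpy); exists y', g.
Qed.

Lemma maximal_doubling_cofinite g :
  doubling g -> (forall h, g `<` h -> ~ doubling h) -> finite_set (A `\` dbase g).
Proof.
move=> [gpi gA gflip gran] gmax; apply: contrapT => /infinite_nat_inj [e eAX einj].
pose N := [set z : (T * bool) * T | exists n (b : bool), z = ((e n, b), e (n.*2 + b)%N)].
have Nx x b y : N ((x, b), y) -> exists2 n, x = e n & y = e (n.*2 + b)%N.
  by move=> [n [b' [-> -> ->]]]; exists n.
have eNX n : ~ dbase g (e n) by case: (eAX n).
have Npi : partial_inj N.
  split=> [[x b] y y' /Nx [n -> ->] /Nx [n' /einj -> ->] //|[x b] [x' b'] y].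
  by move=> /Nx [n -> ->] /Nx [n' -> /einj /double_addb_inj [-> ->]].
apply: (gmax (g `|` N)).
  split=> [p gp|]; first by left.
  move=> /(_ ((e 0, true), e 1)) gN; apply: (eNX 0).
  by exists (e 1); apply: gN; right; exists 0, true.
split.
- apply: partial_injU => //; apply/seteqP; split=> //.
  + move=> [x b] [/(gflip x b true) gx [y /Nx [n xe _]]].
    by apply: (eNX n); rewrite -xe.
  + move=> y [[p /= gpy] [[x b] /Nx [n _ ye]]].
    by apply: (eNX (n.*2 + b)); rewrite -ye; apply: gran; exists p.
- move=> x [y [gxy|/Nx [n -> _]]]; first by apply: gA; exists y.
  by case: (eAX n).
- move=> x b b' [y [gxy|/Nx [n -> _]]].
    by have [y' gxy'] := gflip x b b' (ex_intro _ y gxy); exists y'; left.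
  by exists (e (n.*2 + b')); right; exists n, b'.
- move=> y [[x b] [gpy|/Nx [n _ ->]]].
    by have [y' gy] := gran y (ex_intro _ _ gpy); exists y'; left.
  by exists (e ((n.*2 + b).*2 + true)); right; exists (n.*2 + b)%N, true.
Qed.

End Doubling.

Lemma card_double_le (T : choiceType) (A : set T) :
  infinite_set A -> A `*` [set: bool] #<= A.
Proof.
move=> Ainf; have [g [gd gmax]] := Zorn_bigcup (@doubling_bigcup T A).
have Xcof := maximal_doubling_cofinite gd gmax.
have [gpi gA gflip gran] := gd; set X := dbase g in Xcof gA gran.
have Xinf : infinite_set X.
  move=> Xfin; apply: Ainf; apply: (@sub_finite_set _ _ (X `|` (A `\` X))).
    by move=> x Ax; have [Xx|nXx] := pselect (X x); [left|right].
  by rewrite finite_setU.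
have [x0 _] := infinite_setN0 Xinf.
have XD z : (X `*` [set: bool]) z -> pdom g z by case: z => x b [/= /(gflip x true b)].
apply: (@card_le_trans _ _ _ X); last exact: subset_card_le.
apply: (card_le_absorb_finite (d := pfun x0 g) Xinf Xcof).
- by move=> z /XD Dz; apply: gran; exists z; exact: pfunP.
- move=> z z' /set_mem /XD Dz /set_mem /XD Dz'.
  exact: (pfun_inj (y0 := x0) gpi (mem_set Dz) (mem_set Dz')).
Qed.

Lemma card_image_double_le (T : choiceType) (U : Type) (A : set T) (f : T * bool -> U) :
  infinite_set A -> f @` (A `*` [set: bool]) #<= A.
Proof.
move=> Ainf; apply: card_le_trans (card_image_le f _) _; exact: card_double_le.
Qed.

Lemma almost_sub_trans A B C : almost_sub A B -> almost_sub B C -> almost_sub A C.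
Proof.
move=> AB BC; apply: (@sub_finite_set _ _ ((A `\` B) `|` (B `\` C))).
  by move=> x [Ax nCx]; have [Bx|nBx] := pselect (B x); [right|left].
by rewrite finite_setU.
Qed.

Lemma sub_almost_sub (A B : set nat) : A `<=` B -> almost_sub A B.
Proof. by move=> AB; apply: (@sub_finite_set _ _ set0) => // x [/AB]. Qed.

Lemma almost_subC A B : almost_sub A B -> almost_sub (~` B) (~` A).
Proof.
by apply: sub_finite_set => x [/= nBx nnAx]; split => //; apply: contrapT.
Qed.

Lemma almost_sub_complement_finite (X Y : set nat) : finite_set X -> almost_sub Y (~` X).
Proof. by apply: sub_finite_set => x [_ /contrapT]. Qed.

Lemma almost_sub_cofinite (X Y : set nat) : finite_set (~` X) -> almost_sub Y X.
Proof. by apply: sub_finite_set => x []. Qed.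

Lemma Pfin_le_class A B : Pfin_le (fin_class A) (fin_class B) <-> almost_sub A B.
Proof.
split=> [[A' [B' [[AA' _] [_ B'B] A'B']]]|AB].
  exact: almost_sub_trans AA' (almost_sub_trans A'B' B'B).
by exists A, B; split=> //; split; exact: sub_almost_sub.
Qed.

Lemma infinite_coinfinite_sub (Y : set nat) : infinite_set Y ->
  exists Z, [/\ Z `<=` Y, infinite_set Z & infinite_set (~` Z)].
Proof.
move=> /infinite_split [Z ZY [Zinf YZinf]]; exists Z; split=> //.
by apply: sub_infinite_set YZinf => x [].
Qed.

Lemma infinite_gt (Y : set nat) m : infinite_set Y -> exists y, Y y /\ (m < y)%N.
Proof.
move=> Yinf; apply: contrapT => noY; apply: Yinf.
apply: (@sub_finite_set _ _ `I_m.+1); last exact: finite_II.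
by move=> y Yy; rewrite /= ltnS leqNgt; apply/negP => my; apply: noY; exists y.
Qed.

(* Choice of pairwise distinct points x k in given infinite sets Y k (the
   sequence is built increasing). *)
Lemma increasing_choice (Y : nat -> set nat) : (forall k, infinite_set (Y k)) ->
  exists2 x : nat -> nat, forall k, Y k (x k) & injective x.
Proof.
move=> Yinf; pose next k m := xget 0%N (fun y => Y k y /\ (m < y)%N).
have nextP k m : Y k (next k m) /\ (m < next k m)%N.
  exact: xgetPex (infinite_gt m (Yinf k)).
pose x := fix x k := if k is k'.+1 then next k (x k') else next 0%N 0%N.
exists x => [[|k]|]; [exact: (nextP _ _).1|exact: (nextP _ _).1|].
have xmono : {homo x : i j / (i < j)%N}.
  by apply: homo_ltn => [? ? ? /ltn_trans|k]; [apply|exact: (nextP _ _).2].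
by move=> i j; case: (ltngtP i j) => // /xmono + xij; rewrite xij ltnn.
Qed.

(* Finitely many infinite sets Y 0, ..., Y (n - 1) are split by one set X:
   choose distinct x k in Y (k mod n) and let X contain the x k such that
   k / n is even. *)
Lemma split_finitely_many (Y : nat -> set nat) (n : nat) :
  (forall i, (i < n)%N -> infinite_set (Y i)) ->
  exists X, forall i, (i < n)%N -> infinite_set (Y i `&` X) /\ infinite_set (Y i `\` X).
Proof.
case: n => [|n] Yinf; first by exists set0.
have [x xY xinj] := increasing_choice (fun k => Yinf _ (ltn_pmod k (ltn0Sn n))).
exists [set x k | k in [set k | ~~ odd (k %/ n.+1)]] => i ilt.
pose pick b j := x ((j.*2 + b) * n.+1 + i)%N.
have pick_div b j : (((j.*2 + b) * n.+1 + i) %/ n.+1 = j.*2 + b)%N.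
  by rewrite divnMDl // divn_small // addn0.
have pickY b j : Y i (pick b j).
  by have := xY ((j.*2 + b) * n.+1 + i)%N; rewrite modnMDl modn_small.
have pick_inj b : injective (pick b).
  move=> j j' /xinj /addIn /eqP; rewrite eqn_mul2r /= eqn_add2r => /eqP.
  by move/(congr1 half); rewrite !doubleK.
have pick_infinite b P : (forall j, P (pick b j)) -> infinite_set P.
  move=> Ppick; apply/infiniteP; apply: (@card_le_inj _ _ _ _ (pick b)) => // j j' _ _.
  exact: pick_inj.
split; [apply: (pick_infinite false)|apply: (pick_infinite true)] => j; split=> //.
  by exists ((j.*2 + false) * n.+1 + i)%N; rewrite //= pick_div addn0 odd_double.
by move=> [k /= + /xinj kE]; rewrite kE pick_div addn1 /= odd_double.
Qed.

Lemma reaping_family_infinite R : reaping_family R -> infinite_set R.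
Proof.
move=> [Rinf Rreap] /finite_fsetP [S RS].
pose s : seq (set nat) := finmap.enum_fset S.
have Rnth i : (i < size s)%N -> R (nth set0 s i).
  by move=> ilt; rewrite RS /=; exact: mem_nth.
have [X Xsplit] := split_finitely_many (fun i ilt => Rinf _ (Rnth i ilt)).
have [Z RZ ZX] := Rreap X.
have Zs : Z \in s by move: RZ; rewrite RS.
have Zi : (index Z s < size s)%N by rewrite index_mem.
have [ZXinf ZnXinf] := Xsplit _ Zi; rewrite nth_index // in ZXinf ZnXinf.
by case: ZX; rewrite /almost_sub // setDE setCK.
Qed.

Lemma comparable_of_reaping R : reaping_family R ->
  exists2 F, comparable_family Pfin_minus Pfin_le F & F #<= R.
Proof.
move=> Rreaping; have [Rinf Rreap] := Rreaping.
pose P (Y Z : set nat) := [/\ Z `<=` Y, infinite_set Z & infinite_set (~` Z)].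
pose part Y := xget set0 (P Y).
have partP Y : R Y -> P Y (part Y).
  by move=> RY; exact: xgetPex (infinite_coinfinite_sub (Rinf Y RY)).
pose k (z : set nat * bool) := fin_class (if z.2 then part z.1 else ~` part z.1).
exists (k @` (R `*` [set: bool])); last first.
  exact: card_image_double_le (reaping_family_infinite Rreaping).
split=> [_ [[Y [|]] [/= /partP [_ Zinf Zcinf] _] <-]|_ [A [Ainf Acinf ->]]].
- by exists (part Y).
- by exists (~` part Y); rewrite setCK.
have [Y RY [YA|YAc]] := Rreap A; have [ZY _ _] := partP Y RY.
- exists (k (Y, true)); first by exists (Y, true).
  by right; rewrite Pfin_le_class; exact: almost_sub_trans (sub_almost_sub ZY) YA.
- exists (k (Y, false)); first by exists (Y, false).
  left; rewrite Pfin_le_class; have := almost_subC YAc; rewrite setCK => AYc.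
  by apply: almost_sub_trans AYc (sub_almost_sub _) => x nYx /ZY.
Qed.

Lemma reaping_of_comparable F : comparable_family Pfin_minus Pfin_le F ->
  exists2 R, reaping_family R & R #<= F.
Proof.
move=> [FP Fcomp].
pose P (C : set (set nat)) A := [/\ infinite_set A, infinite_set (~` A) & C = fin_class A].
pose rep C := xget set0 (P C).
have repP C : F C -> P C (rep C) by move=> /FP PC; exact: xgetPex PC.
pose k (z : set (set nat) * bool) := if z.2 then rep z.1 else ~` rep z.1.
have [q0 Fq0] : exists q, F q.
  have [Z [_ Zinf Zcinf]] := infinite_coinfinite_sub infinite_nat.
  by have [q Fq _] := Fcomp (fin_class Z) (ex_intro _ Z (And3 Zinf Zcinf erefl)); exists q.
have Rreaping : reaping_family (k @` (F `*` [set: bool])).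
  split=> [_ [[C [|]] [/= /repP [Ainf Acinf _] _] <-] //|X].
  have [Xfin|Xinf] := pselect (finite_set X).
    exists (k (q0, true)); first by exists (q0, true).
    by right; exact: almost_sub_complement_finite.
  have [Xcfin|Xcinf] := pselect (finite_set (~` X)).
    by exists (k (q0, true)); [exists (q0, true)|left; exact: almost_sub_cofinite].
  have [q Fq] := Fcomp (fin_class X) (ex_intro _ X (And3 Xinf Xcinf erefl)).
  have [_ _ qE] := repP q Fq; rewrite qE !Pfin_le_class => -[XA|AX].
    by exists (k (q, false)); [exists (q, false)|right; exact: almost_subC].
  by exists (k (q, true)); [exists (q, true)|left].
exists (k @` (F `*` [set: bool])) => //.
apply: card_image_double_le => Ffin; apply: (reaping_family_infinite Rreaping).
by apply/finite_image/finite_setX => //; exact: finite_finset.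
Qed.

(* Minimum families exist since (P(omega)/fin)^- is comparable and the family
   of all infinite sets is reaping; the two minima then bound each other. *)
Theorem mainTheorem6 :
  exists (F : set (set (set nat))) (R : set (set nat)),
    [/\ min_card (comparable_family Pfin_minus Pfin_le) F,
        min_card reaping_family R
      & (F #= R)%card].
Proof.
have [F Fmin] : exists F, min_card (comparable_family Pfin_minus Pfin_le) F.
  apply: min_card_exists; exists Pfin_minus; split=> // C PC; exists C => //; left.
  by case: PC => A [_ _ ->]; rewrite Pfin_le_class; exact: sub_almost_sub.
have [R Rmin] : exists R, min_card reaping_family R.
  apply: min_card_exists; exists [set Y | infinite_set Y]; split=> // X.
  have [Xfin|Xinf] := pselect (finite_set X).
    exists (~` X); last by right; exact: sub_almost_sub.
    by move=> Xcfin; apply: infinite_nat; rewrite -(setUv X) finite_setU.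
  by exists X => //; left; exact: sub_almost_sub.
exists F, R; split=> //; apply/card_eqPle; split.
- have [F' F'comp F'R] := comparable_of_reaping Rmin.1.
  exact: card_le_trans (Fmin.2 _ F'comp) F'R.
- have [R' R'reap R'F] := reaping_of_comparable Fmin.1.
  exact: card_le_trans (Rmin.2 _ R'reap) R'F.
Qed.
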